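(* Consider binary classification with $\mathbb{P}(Y=1\mid X)=\eta(f(W,X))$, where $\eta:\mathbb{R}\to[0,1]$ is strictly increasing and differentiable, $f(W,x)=1_p^\top\sigma(Wx)$ with $W\in\mathbb{R}^{p\times d}$, $x\in\mathbb{R}^d$, and $\sigma(u)=u^2/2$ applied elementwise, trained with the least-squares loss $(Y-\eta(f(W,X)))^2$. Let $\nabla f(W,x)\in\mathbb{R}^{p\times d}$ be the gradient in $W$, $v_W(x)=\eta(f(W,x))(1-\eta(f(W,x)))$, $U_W(x)=\eta'(f(W,x))^2\,\nabla f(W,x)\otimes\nabla f(W,x)$, and $\Sigma_{\mathrm{ERM}}=\mathbb{E}[U_W(X)]^{-1}\mathbb{E}[v_W(X)U_W(X)]\mathbb{E}[U_W(X)]^{-1}$. Then $$\mathbb{E}U_W(X)=(W\otimes W)\cdot\mathbb{E}\big[\eta'(f(W,X))^2\,XX^\top\otimes XX^\top\big],\qquad \mathbb{E}[v_W(X)U_W(X)]=(W\otimes W)\,\mathbb{E}\big[v_W(X)\eta'(f(W,X))^2\,XX^\top\otimes XX^\top\big].$$ Suppose further that $G$ is the group of circular shifts of $\mathbb{R}^d$, $(g_ix)_{(j+i)\bmod d}=x_j$, $i=0,\dots,d-1$, with uniform distribution $\mathbb{Q}$, that $f(W,gx)=f(W,x)$ for all $g\in G$ and $x$, and let $\Sigma_{\mathrm{aERM}}=\Sigma_{\mathrm{ERM}}-\mathbb{E}[U_W(X)]^{-1}\mathbb{E}\big[v_W(X)\,\mathrm{Cov}_{g\sim\mathbb{Q}}\big(\eta'(f(W,gX))\nabla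 f(W,gX)\big)\big]\mathbb{E}[U_W(X)]^{-1}$. Then, with $C_x$ the circulant matrix $C_x(i,j)=x_{i-j+1}$ (indices mod $d$), $$\mathbb{E}U_W(X)\,\Sigma_{\mathrm{aERM}}\,\mathbb{E}U_W(X)=(W\otimes W)\cdot d^{-2}\,\mathbb{E}\big[v_W(X)\eta'(f(W,X))^2\,C_XC_X^\top\otimes C_XC_X^\top\big],$$ and hence $$\mathbb{E}[U_W(X)](\Sigma_{\mathrm{ERM}}-\Sigma_{\mathrm{aERM}})\mathbb{E}[U_W(X)]=(W\otimes W)\,\mathbb{E}\Big[v_W(X)\eta'(f(W,X))^2\big(XX^\top\otimes XX^\top-d^{-2}\,C_XC_X^\top\otimes C_XC_X^\top\big)\Big].$$
   Context: $\otimes$ is the Kronecker product; for $p\times d$ matrices $A,B$, $A\otimes B$ has entries indexed by $((i,i'),(j,j'))$ equal to $A_{ij}B_{i'j'}$. When a matrix inverse or product between such arrays is taken, they are viewed as $pd\times pd$ matrices via the index identification $((i,i'),(j,j'))\leftrightarrow((i,j),(i',j'))$, so that $\nabla f\otimes\nabla f$ corresponds to $\mathrm{vec}(\nabla f)\mathrm{vec}(\nabla f)^\top$. $\Sigma_{\mathrm{ERM}}$ and $\Sigma_{\mathrm{aERM}}$ are the asymptotic covariances of the least-squares ERM and augmented ERM for $W$. The covariance $\mathrm{Cov}_{g\sim\mathbb{Q}}$ is over $g$ with $X$ fixed. *)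

From HB Require Import structures.
From mathcomp Require Import all_boot all_order all_algebra.
From mathcomp Require Import all_classical all_reals all_analysis.
From mathcomp Require Import mxtens.
Set Implicit Arguments. Unset Strict Implicit. Unset Printing Implicit Defensive.
Import Order.TTheory GRing.Theory Num.Theory.
Local Open Scope ring_scope.
Local Open Scope classical_set_scope.

(* Index conventions: a pair (i,j) in 'I_m * 'I_n is identified with the
   index mxtens_index (i,j) (= i*n + j) of 'I_(m*n); this is the convention of
   the Kronecker product  A *t B  (tensmx) of mathcomp.real_closed.mxtens,
   whose entry at ((i,i'),(j,j')) is A i j * B i' j'. *)

Definition vecm (R : realType) (m n : nat) (A : 'M[R]_(m, n)) : 'cV[R]_(m * n) :=
  \col_k A (mxtens_unindex k).1 (mxtens_unindex k).2.

(* The index identification ((i,i'),(j,j')) <-> ((i,j),(i',j')):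
   a Kronecker-indexed array M : 'M_(m*m', n*n') viewed as an (m n) x (m' n')
   matrix. *)
Definition realign (R : realType) (m n m' n' : nat) (M : 'M[R]_(m * m', n * n'))
  : 'M[R]_(m * n, m' * n') :=
  \matrix_(a, b) M (mxtens_index ((mxtens_unindex a).1, (mxtens_unindex b).1))
                   (mxtens_index ((mxtens_unindex a).2, (mxtens_unindex b).2)).

Definition sigma2 (R : realType) (u : R) : R := u ^+ 2 / 2.

Definition fnet (R : realType) (p d : nat) (W : 'M[R]_(p, d)) (x : 'cV[R]_d) : R :=
  \sum_(k < p) sigma2 ((W *m x) k 0).

Definition gradf (R : realType) (p d : nat) (W : 'M[R]_(p, d)) (x : 'cV[R]_d)
  : 'M[R]_(p, d) :=
  \matrix_(i, j) derive1 (fun t : R => fnet (W + t *: delta_mx i j) x) 0.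

Definition vW (R : realType) (p d : nat) (eta : R -> R) (W : 'M[R]_(p, d))
  (x : 'cV[R]_d) : R :=
  eta (fnet W x) * (1 - eta (fnet W x)).

Definition UW (R : realType) (p d : nat) (eta : R -> R) (W : 'M[R]_(p, d))
  (x : 'cV[R]_d) : 'M[R]_(p * d) :=
  ((derive1 eta (fnet W x)) ^+ 2) *: (vecm (gradf W x) *m (vecm (gradf W x))^T).

Definition Emx (R : realType) (dT : measure_display) (T : measurableType dT)
  (P : probability T R) (m n : nat) (F : T -> 'M[R]_(m, n)) : 'M[R]_(m, n) :=
  \matrix_(i, j) Rintegral P setT (fun t => F t i j).

Definition shift_idx (d : nat) (i k : 'I_d) : 'I_d :=
  Ordinal (ltn_pmod (k + d - i) (leq_ltn_trans (leq0n k) (ltn_ord k))).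

Definition shiftv (R : realType) (d : nat) (i : 'I_d) (x : 'cV[R]_d) : 'cV[R]_d :=
  \col_k x (shift_idx i k) 0.

(* circulant matrix C_x(i,j) = x_{i-j} (0-based, indices mod d) *)
Definition circulant (R : realType) (d : nat) (x : 'cV[R]_d) : 'M[R]_d :=
  \matrix_(i, j) x (shift_idx j i) 0.

(* covariance (as vec-covariance) of Z(g) for g uniform on the d shifts *)
Definition covQ (R : realType) (d N : nat) (Z : 'I_d -> 'cV[R]_N) : 'M[R]_N :=
  let mean := (d%:R)^-1 *: \sum_(i < d) Z i in
  (d%:R)^-1 *: \sum_(i < d) (Z i *m (Z i)^T) - mean *m mean^T.

Definition covW (R : realType) (p d : nat) (eta : R -> R) (W : 'M[R]_(p, d))
  (x : 'cV[R]_d) : 'M[R]_(p * d) :=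
  covQ (fun i : 'I_d =>
          vecm ((derive1 eta (fnet W (shiftv i x))) *: gradf W (shiftv i x))).

(* column vector as a d-tuple (to use the product sigma-algebra on R^d) *)
Definition tup (R : realType) (d : nat) (x : 'cV[R]_d) : d.-tuple R :=
  [tuple x i 0 | i < d].

Definition SigmaERM (R : realType) (dT : measure_display) (T : measurableType dT)
  (P : probability T R) (p d : nat) (X : T -> 'cV[R]_d) (eta : R -> R)
  (W : 'M[R]_(p, d)) : 'M[R]_(p * d) :=
  let EU := Emx P (fun t => UW eta W (X t)) in
  invmx EU *m Emx P (fun t => vW eta W (X t) *: UW eta W (X t)) *m invmx EU.

Definition SigmaaERM (R : realType) (dT : measure_display) (T : measurableType dT)
  (P : probability T R) (p d : nat) (X : T -> 'cV[R]_d) (eta : R -> R)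
  (W : 'M[R]_(p, d)) : 'M[R]_(p * d) :=
  let EU := Emx P (fun t => UW eta W (X t)) in
  SigmaERM P X eta W
  - invmx EU *m Emx P (fun t => vW eta W (X t) *: covW eta W (X t)) *m invmx EU.

From HB Require Import structures.
From mathcomp Require Import all_boot all_order all_algebra.
From mathcomp Require Import all_classical all_reals all_analysis.
From mathcomp Require Import mxtens.
From mathcomp Require Import ring lra.
From mathcomp Require Import measurable_realfun.
Import Order.TTheory GRing.Theory Num.Theory.
Set Implicit Arguments. Unset Strict Implicit. Unset Printing Implicit Defensive.
Import numFieldNormedType.Exports.
Local Open Scope ring_scope.
Local Open Scope classical_set_scope.

(* Since f(W,x) = |Wx|^2/2, the gradient is W x x^T, so vec(grad f) vec(grad f)^T
   is (W (x) W)(x x^T (x) x x^T) up to the index realignment, and the first two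
   identities are linearity of the expectation.  If f is shift invariant, then
   eta'(f(g x)) = eta'(f(x)) for every shift g, so the covariance over the group is
   d^-1 sum_i U_W(g_i x) - d^-2 (W (x) W)(C_x C_x^T (x) C_x C_x^T), because
   sum_i (g_i x)(g_i x)^T = C_x C_x^T.  As g_i X and X have the same law and v_W is
   shift invariant, E[v_W(X) U_W(g_i X)] = E[v_W(X) U_W(X)]; the remaining
   identities follow by cancelling E U_W(X) against its inverse. *)

Section RintegralSum.
Variables (R : realType) (dT : measure_display) (T : measurableType dT).
Variables (mu : measure T R) (D : set T).
Hypothesis mD : measurable D.

Lemma integrableZl_EFin (c : R) (f : T -> R) :
  mu.-integrable D (EFin \o f) -> mu.-integrable D (EFin \o (fun t => c * f t)).
Proof. by move=> intf; apply: (eq_integrable mD _ _ _ (integrableZl mD c intf)). Qed.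

Lemma integrable_sum_EFin I (s : seq I) (h : I -> T -> R) :
  (forall i, mu.-integrable D (EFin \o h i)) ->
  mu.-integrable D (EFin \o (fun t => \sum_(i <- s) h i t)).
Proof.
move=> inth.
apply: (eq_integrable mD _ _ _ (integrable_sum (P := xpredT) mD s (fun i _ => inth i))).
by move=> t _; rewrite /= sumEFin.
Qed.

Lemma Rintegral_sum I (s : seq I) (h : I -> T -> R) :
  (forall i, mu.-integrable D (EFin \o h i)) ->
  \int[mu]_(t in D) (\sum_(i <- s) h i t) = \sum_(i <- s) \int[mu]_(t in D) h i t.
Proof.
move=> inth; elim: s => [|i s IHs].
  by under eq_Rintegral => t _ do rewrite big_nil; rewrite big_nil Rintegral_cst // mul0r.
rewrite big_cons -IHs -RintegralD //; last exact: integrable_sum_EFin.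
by apply: eq_Rintegral => t _; rewrite big_cons.
Qed.

End RintegralSum.

Lemma Rintegral_eq_law (R : realType) (dT dU : measure_display)
    (T : measurableType dT) (U : measurableType dU) (mu : measure T R)
    (Y Z : T -> U) (H : U -> R) :
  measurable_fun setT Y -> measurable_fun setT Z ->
  (forall A, measurable A -> mu (Y @^-1` A) = mu (Z @^-1` A)) ->
  measurable_fun setT H ->
  mu.-integrable setT (EFin \o (H \o Y)) -> mu.-integrable setT (EFin \o (H \o Z)) ->
  \int[mu]_(t in setT) H (Y t) = \int[mu]_(t in setT) H (Z t).
Proof.
move=> mY mZ law mH intY intZ.
have mEH : measurable_fun setT (EFin \o H) by exact/measurable_EFinP.
have pushE V : measurable_fun setT V -> mu.-integrable setT (EFin \o (H \o V)) ->
    \int[mu]_(t in setT) H (V t) = fine (\int[pushforward mu V]_(y in setT) (H y)%:E).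
  by move=> mV intV; rewrite integral_pushforward.
rewrite (pushE Y) // (pushE Z) //; congr fine.
by apply: eq_measure_integral => A mA _; exact: law.
Qed.

Section MatrixExpectation.
Variables (R : realType) (dT : measure_display) (T : measurableType dT).
Variable P : probability T R.

Definition mx_integrable m n (F : T -> 'M[R]_(m, n)) :=
  forall i j, P.-integrable setT (EFin \o (fun t => F t i j)).

Lemma eq_mx_integrable m n (F G : T -> 'M[R]_(m, n)) :
  F =1 G -> mx_integrable F -> mx_integrable G.
Proof.
move=> FG intF i j; apply: (eq_integrable measurableT _ _ _ (intF i j)).
by move=> t _; rewrite /= FG.
Qed.

Lemma mx_integrableZ m n (c : R) (F : T -> 'M[R]_(m, n)) :
  mx_integrable F -> mx_integrable (fun t => c *: F t).
Proof.
move=> intF i j.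
apply: (eq_integrable measurableT _ _ _ (integrableZl_EFin measurableT c (intF i j))).
by move=> t _; rewrite /= mxE.
Qed.

Lemma mx_integrableZl_bounded m n (h : T -> R) (M : R) (F : T -> 'M[R]_(m, n)) :
  measurable_fun setT h -> (forall t, `|h t| <= M) ->
  mx_integrable F -> mx_integrable (fun t => h t *: F t).
Proof.
move=> mh hM intF i j.
apply: (eq_integrable measurableT _ _ _ (integrableMr measurableT mh _ (intF i j))).
  by move=> t _; rewrite /= mxE.
exists M; split => [|M' ltMM' t _]; first exact: num_real.
exact: le_trans (hM t) (ltW ltMM').
Qed.

Lemma mx_integrable_sum m n I (s : seq I) (F : I -> T -> 'M[R]_(m, n)) :
  (forall k, mx_integrable (F k)) -> mx_integrable (fun t => \sum_(k <- s) F k t).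
Proof.
move=> intF i j.
have intFij := integrable_sum_EFin measurableT s (fun k => intF k i j).
apply: (eq_integrable measurableT _ _ _ intFij).
by move=> t _; rewrite /= summxE.
Qed.

Lemma mx_integrable_mulmxl m n k (A : 'M[R]_(k, m)) (F : T -> 'M[R]_(m, n)) :
  mx_integrable F -> mx_integrable (fun t => A *m F t).
Proof.
move=> intF i j.
have intAF l := integrableZl_EFin measurableT (A i l) (intF l j).
apply: (eq_integrable measurableT _ _ _ (integrable_sum_EFin measurableT _ intAF)).
by move=> t _; rewrite /= mxE.
Qed.

Lemma mx_integrable_realign m n m' n' (F : T -> 'M[R]_(m * m', n * n')) :
  mx_integrable F -> mx_integrable (fun t => realign (F t)).
Proof.
move=> intF i j; apply: (eq_integrable measurableT _ _ _ (intF _ _)).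
by move=> t _; rewrite /= mxE.
Qed.

Lemma eq_Emx m n (F G : T -> 'M[R]_(m, n)) : F =1 G -> Emx P F = Emx P G.
Proof. by move=> /funext ->. Qed.

Lemma EmxZ m n (c : R) (F : T -> 'M[R]_(m, n)) :
  mx_integrable F -> Emx P (fun t => c *: F t) = c *: Emx P F.
Proof.
move=> intF; apply/matrixP => i j; rewrite !mxE -RintegralZl //.
by apply: eq_Rintegral => t _; rewrite mxE.
Qed.

Lemma EmxB m n (F G : T -> 'M[R]_(m, n)) :
  mx_integrable F -> mx_integrable G ->
  Emx P (fun t => F t - G t) = Emx P F - Emx P G.
Proof.
move=> intF intG; apply/matrixP => i j; rewrite !mxE -RintegralB //.
by apply: eq_Rintegral => t _; rewrite !mxE.
Qed.

Lemma Emx_sum m n I (s : seq I) (F : I -> T -> 'M[R]_(m, n)) :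
  (forall k, mx_integrable (F k)) ->
  Emx P (fun t => \sum_(k <- s) F k t) = \sum_(k <- s) Emx P (F k).
Proof.
move=> intF; apply/matrixP => i j; rewrite !mxE summxE.
under [RHS]eq_bigr do rewrite mxE.
rewrite -(Rintegral_sum measurableT _ (fun k => intF k i j)).
by apply: eq_Rintegral => t _; rewrite summxE.
Qed.

Lemma Emx_mulmxl m n k (A : 'M[R]_(k, m)) (F : T -> 'M[R]_(m, n)) :
  mx_integrable F -> Emx P (fun t => A *m F t) = A *m Emx P F.
Proof.
move=> intF; apply/matrixP => i j; rewrite !mxE.
under eq_Rintegral => t _ do rewrite mxE.
have intAF l := integrableZl_EFin measurableT (A i l) (intF l j).
rewrite (Rintegral_sum measurableT _ intAF).
by apply: eq_bigr => l _; rewrite mxE RintegralZl.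
Qed.

Lemma Emx_realign m n m' n' (F : T -> 'M[R]_(m * m', n * n')) :
  Emx P (fun t => realign (F t)) = realign (Emx P F).
Proof.
by apply/matrixP => i j; rewrite !mxE; apply: eq_Rintegral => t _; rewrite mxE.
Qed.

End MatrixExpectation.

Section KroneckerAlgebra.
Variable R : realType.

Lemma realign_tens m n (A B : 'M[R]_(m, n)) : realign (A *t B) = vecm A *m (vecm B)^T.
Proof. by apply/matrixP => a b; rewrite !mxE big_ord1 !mxE !mxtens_indexK. Qed.

Lemma realignZ m n m' n' (c : R) (M : 'M[R]_(m * m', n * n')) :
  realign (c *: M) = c *: realign M.
Proof. by apply/matrixP => a b; rewrite !mxE. Qed.

Lemma realignB m n m' n' (M N : 'M[R]_(m * m', n * n')) :
  realign (M - N) = realign M - realign N.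
Proof. by apply/matrixP => a b; rewrite !mxE. Qed.

Lemma vecmZ m n (c : R) (A : 'M[R]_(m, n)) : vecm (c *: A) = c *: vecm A.
Proof. by apply/matrixP => a b; rewrite !mxE. Qed.

Lemma vecm_sum m n I (s : seq I) (F : I -> 'M[R]_(m, n)) :
  vecm (\sum_(i <- s) F i) = \sum_(i <- s) vecm (F i).
Proof.
by apply/matrixP => a b; rewrite !mxE !summxE; apply: eq_bigr => i _; rewrite mxE.
Qed.

Lemma circulant_mulmx_tr d (x : 'cV[R]_d) :
  circulant x *m (circulant x)^T = \sum_(i < d) shiftv i x *m (shiftv i x)^T.
Proof.
apply/matrixP => a b; rewrite !mxE summxE; apply: eq_bigr => i _.
by rewrite !mxE big_ord1 !mxE.
Qed.

End KroneckerAlgebra.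

Lemma mulmx_trZ (R : comPzRingType) n (c : R) (v : 'cV[R]_n) :
  (c *: v) *m (c *: v)^T = c ^+ 2 *: (v *m v^T).
Proof. by rewrite linearZ /= -scalemxAl -scalemxAr scalerA expr2. Qed.

Lemma tensmx_sum (R : pzRingType) m n m' n' (I J : finType)
    (A : I -> 'M[R]_(m, n)) (B : J -> 'M[R]_(m', n')) :
  (\sum_i A i) *t (\sum_j B j) = \sum_i \sum_j (A i *t B j).
Proof.
apply/matrixP => a b; rewrite !mxE !summxE mulr_suml; apply: eq_bigr => i _.
by rewrite summxE mulr_sumr; apply: eq_bigr => j _; rewrite !mxE.
Qed.

Lemma mulmx_invmx_sandwich (R : comUnitRingType) n (U A : 'M[R]_n) :
  U \in unitmx -> U *m (invmx U *m A *m invmx U) *m U = A.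
Proof. by move=> Uunit; rewrite !mulmxA mulmxV // mul1mx -mulmxA mulVmx // mulmx1. Qed.

Section Network.
Variables (R : realType) (p d : nat) (W : 'M[R]_(p, d)).

(* [t |-> fnet (W + t E_ij) x] is a polynomial, differentiated formally. *)
Lemma gradfE x : gradf W x = W *m (x *m x^T).
Proof.
apply/matrixP => i j; rewrite /gradf mxE mulmxA mxE big_ord1 mxE.
pose a k := (W *m x) k 0.
pose b k := ((delta_mx i j : 'M[R]_(p, d)) *m x) k 0.
pose q : {poly R} := \sum_(k < p) ((a k)%:P + b k *: 'X) ^+ 2 * (2^-1)%:P.
have -> : (fun t : R => fnet (W + t *: delta_mx i j) x) = horner q.
  apply/funext => t; rewrite /fnet /q horner_sum; apply: eq_bigr => k _.
  rewrite /sigma2 mulmxDl -scalemxAl !mxE hornerM hornerC horner_exp.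
  by rewrite hornerD hornerC hornerZ hornerX /a /b !mxE [_ * t]mulrC.
rewrite -derivE raddf_sum horner_sum (bigD1 i) //= big1 => [|k /negbTE kni]; last first.
  have -> : b k = 0 by rewrite /b !mxE big1 // => l _; rewrite !mxE kni mul0r.
  by rewrite scale0r addr0 -rmorphXn -polyCM derivC horner0.
rewrite addr0 derivM derivC mulr0 addr0 expr2 derivM derivD derivC derivZ derivX.
rewrite !hornerE /a /b !mxE (bigD1 j) //= big1 => [|l /negbTE lnj]; last first.
  by rewrite !mxE lnj andbF mul0r.
by rewrite !mxE !eqxx /= !mul1r !addr0 mulr1; field.
Qed.

Lemma gradf_entry x i j : gradf W x i j = (W *m x) i 0 * x j 0.
Proof. by rewrite gradfE mulmxA mxE big_ord1 !mxE. Qed.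

Lemma UWE eta x :
  UW eta W x = realign ((W *t W) *m ((derive1 eta (fnet W x) ^+ 2) *:
                  ((x *m x^T) *t (x *m x^T)))).
Proof. by rewrite /UW -scalemxAr tensmx_mul realignZ realign_tens gradfE. Qed.

Lemma covWE eta x : (forall i, fnet W (shiftv i x) = fnet W x) ->
  covW eta W x = d%:R^-1 *: \sum_(i < d) UW eta W (shiftv i x)
   - (d%:R ^+ 2)^-1 *: realign ((W *t W) *m ((derive1 eta (fnet W x) ^+ 2) *:
        ((circulant x *m (circulant x)^T) *t (circulant x *m (circulant x)^T)))).
Proof.
move=> fnet_shift; rewrite /covW /covQ.
set c := derive1 eta (fnet W x).
congr (_ *: _ - _); first by apply: eq_bigr => i _; rewrite vecmZ mulmx_trZ.
under eq_bigr do rewrite vecmZ fnet_shift -/c.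
rewrite -scaler_sumr -vecm_sum scalerA mulmx_trZ -scalemxAr tensmx_mul realignZ.
rewrite realign_tens scalerA exprMn exprVn circulant_mulmx_tr mulmx_sumr.
by congr (_ *: (vecm _ *m (vecm _)^T)); apply: eq_bigr => i _; rewrite gradfE.
Qed.

Lemma norm_vW_le1 eta x : (forall u, 0 <= eta u <= 1) -> `|vW eta W x| <= 1.
Proof.
move=> eta01; rewrite /vW; have /andP[eta_ge0 eta_le1] := eta01 (fnet W x).
by rewrite ger0_norm; [nra | apply: mulr_ge0; rewrite ?subr_ge0].
Qed.

End Network.

Lemma measurable_fun_derivable (R : realType) (f : R -> R) :
  (forall u, derivable f u 1) -> measurable_fun setT f.
Proof.
move=> df; apply: continuous_measurable_fun => u.
exact/differentiable_continuous/derivable1_diffP.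
Qed.

(* [derive1 f] is the pointwise limit of difference quotients with steps [1/(n+1)]. *)
Lemma measurable_derive1 (R : realType) (f : R -> R) :
  (forall u, derivable f u 1) -> measurable_fun setT (derive1 f).
Proof.
move=> df; have mf := measurable_fun_derivable df.
pose q n u := (harmonic n)^-1 * (f (harmonic n + u) - f u).
apply: (measurable_fun_cvg (h := q)) => [n|u _].
  apply: measurable_funM => //; apply: measurable_funB => //.
  by apply: measurableT_comp => //; exact: measurable_funD.
have /cvgr_dnbhsP/(_ (@harmonic R)) := df u.
move=> /(_ (conj (fun n => lt0r_neq0 (harmonic_gt0 n)) cvg_harmonic)).
rewrite derive1E /derive.
suff -> : (fun n => q n u) =
          (fun n => (harmonic n)^-1 *: ((f \o shift u) (harmonic n)%:A - f u)) by [].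
by apply/funext => n; rewrite /q /= /GRing.scale /= mulr1.
Qed.

Section CoordinateMeasurability.
Variables (R : realType) (d : nat).

Definition col_tuple (y : d.-tuple R) : 'cV[R]_d := \col_k tnth y k.

Lemma tupK : cancel (@tup R d) col_tuple.
Proof. by move=> x; apply/matrixP => k l; rewrite !mxE tnth_mktuple (ord1 l). Qed.

Lemma measurable_tup dT (T : measurableType dT) (Y : T -> 'cV[R]_d) :
  (forall k, measurable_fun setT (fun t => Y t k 0)) ->
  measurable_fun setT (fun t => tup (Y t)).
Proof.
move=> mY; apply/measurable_fun_tnthP => k.
by apply: eq_measurable_fun (mY k) => t _; rewrite /= tnth_mktuple.
Qed.

Definition cV_measurable (h : 'cV[R]_d -> R) :=
  measurable_fun [set: d.-tuple R] (fun y => h (col_tuple y)).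

Lemma measurable_cV_comp dT (T : measurableType dT) (Y : T -> 'cV[R]_d) h :
  (forall k, measurable_fun setT (fun t => Y t k 0)) -> cV_measurable h ->
  measurable_fun setT (fun t => h (Y t)).
Proof.
move=> mY mh; apply: eq_measurable_fun (measurableT_comp mh (measurable_tup mY)).
by move=> t _; rewrite /= tupK.
Qed.

Lemma cV_measurable_coord k : cV_measurable (fun x => x k 0).
Proof. by apply: eq_measurable_fun (measurable_tnth k) => y _; rewrite /= mxE. Qed.

Lemma cV_measurable_mulmx m (A : 'M[R]_(m, d)) k : cV_measurable (fun x => (A *m x) k 0).
Proof.
have mAk : measurable_fun setT (fun y : d.-tuple R => \sum_(j < d) A k j * tnth y j).
  apply: measurable_sum => j.
  by apply: measurable_funM; [exact: measurable_cst | exact: measurable_tnth].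
apply: eq_measurable_fun mAk => y _.
by rewrite /= mxE; apply: eq_bigr => j _; rewrite mxE.
Qed.

End CoordinateMeasurability.

Section NetworkMeasurability.
Variables (R : realType) (p d : nat) (W : 'M[R]_(p, d)) (eta : R -> R).

Lemma cV_measurable_fnet : cV_measurable (fnet W).
Proof.
rewrite /cV_measurable /fnet /sigma2.
apply: measurable_sum => k; apply: measurable_funM; last exact: measurable_cst.
exact: measurable_funX (cV_measurable_mulmx W k).
Qed.

Lemma cV_measurable_vW : measurable_fun setT eta -> cV_measurable (vW eta W).
Proof.
move=> meta; rewrite /cV_measurable /vW.
have metaf := measurableT_comp meta cV_measurable_fnet.
apply: measurable_funM => //; apply: measurable_funB => //; exact: measurable_cst.
Qed.

Lemma cV_measurable_UW a b :
  measurable_fun setT (derive1 eta) -> cV_measurable (fun x => UW eta W x a b).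
Proof.
move=> mdeta.
have mgrad i j : cV_measurable (fun x => gradf W x i j).
  apply: eq_measurable_fun (measurable_funM (cV_measurable_mulmx W i)
    (cV_measurable_coord j)) => y _.
  by rewrite /= gradf_entry.
have mw : cV_measurable (fun x => derive1 eta (fnet W x) ^+ 2) :=
  measurable_funX 2 (measurableT_comp mdeta cV_measurable_fnet).
apply: eq_measurable_fun (measurable_funM mw (measurable_funM
  (mgrad (mxtens_unindex a).1 (mxtens_unindex a).2)
  (mgrad (mxtens_unindex b).1 (mxtens_unindex b).2))).
by move=> y _; rewrite /= /UW [RHS]mxE [in RHS]mxE big_ord1 !mxE.
Qed.

End NetworkMeasurability.

Lemma SigmaaERM_sandwich (R : realType) (dT : measure_display) (T : measurableType dT)
    (P : probability T R) p d (X : T -> 'cV[R]_d) eta (W : 'M[R]_(p, d)) :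
  Emx P (fun t => UW eta W (X t)) \in unitmx ->
  Emx P (fun t => UW eta W (X t)) *m SigmaaERM P X eta W
    *m Emx P (fun t => UW eta W (X t))
  = Emx P (fun t => vW eta W (X t) *: UW eta W (X t))
    - Emx P (fun t => vW eta W (X t) *: covW eta W (X t)).
Proof. by move=> EUunit; rewrite mulmxBr mulmxBl !mulmx_invmx_sandwich. Qed.

Lemma SigmaERM_subr_sandwich (R : realType) (dT : measure_display) (T : measurableType dT)
    (P : probability T R) p d (X : T -> 'cV[R]_d) eta (W : 'M[R]_(p, d)) :
  Emx P (fun t => UW eta W (X t)) \in unitmx ->
  Emx P (fun t => UW eta W (X t)) *m (SigmaERM P X eta W - SigmaaERM P X eta W)
    *m Emx P (fun t => UW eta W (X t))
  = Emx P (fun t => vW eta W (X t) *: covW eta W (X t)).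
Proof.
by move=> EUunit; rewrite /SigmaaERM opprB addrC subrK mulmx_invmx_sandwich.
Qed.

Section ShiftInvariantModel.
Variables (R : realType) (p d : nat) (dT : measure_display) (T : measurableType dT).
Variables (P : probability T R) (X : T -> 'cV[R]_d) (eta : R -> R) (W : 'M[R]_(p, d)).
Hypothesis eta01 : forall u, 0 <= eta u <= 1.
Hypothesis eta_derivable : forall u, derivable eta u 1.
Hypothesis X_measurable : forall i : 'I_d, measurable_fun setT (fun t => X t i 0).
Hypothesis X_moment4 : forall a b c e : 'I_d,
  P.-integrable setT (fun t =>
    ((derive1 eta (fnet W (X t))) ^+ 2 * (X t a 0 * X t b 0 * X t c 0 * X t e 0))%:E).

Local Notation w t := (derive1 eta (fnet W (X t)) ^+ 2).
Local Notation v t := (vW eta W (X t)).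
Local Notation XX t := (X t *m (X t)^T).
Local Notation CC t := (circulant (X t) *m (circulant (X t))^T).

Let eta_measurable := measurable_fun_derivable eta_derivable.
Let derive1_eta_measurable := measurable_derive1 eta_derivable.

Let v_measurable : measurable_fun setT (fun t => v t) :=
  measurable_cV_comp X_measurable (cV_measurable_vW W eta_measurable).

Lemma mx_integrable_vZ m n (F : T -> 'M[R]_(m, n)) :
  mx_integrable P F -> mx_integrable P (fun t => v t *: F t).
Proof. by apply: mx_integrableZl_bounded v_measurable _ => t; exact: norm_vW_le1. Qed.

Lemma mx_integrable_moment4 (s s' : 'I_d -> 'I_d) :
  mx_integrable P (fun t => w t *:
    ((\col_k X t (s k) 0 *m (\col_k X t (s k) 0)^T)
     *t (\col_k X t (s' k) 0 *m (\col_k X t (s' k) 0)^T))).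
Proof.
move=> i j; apply: (eq_integrable measurableT _ _ _ (X_moment4 (s (mxtens_unindex i).1)
  (s (mxtens_unindex j).1) (s' (mxtens_unindex i).2) (s' (mxtens_unindex j).2))).
by move=> t _; rewrite /= !mxE !big_ord1 !mxE !mulrA.
Qed.

Lemma mx_integrable_XX : mx_integrable P (fun t => w t *: (XX t *t XX t)).
Proof.
have colX t : \col_k X t k 0 = X t by apply/matrixP => k l; rewrite mxE (ord1 l).
by apply: eq_mx_integrable (mx_integrable_moment4 id id) => t; rewrite colX.
Qed.

Lemma mx_integrable_CC : mx_integrable P (fun t => w t *: (CC t *t CC t)).
Proof.
apply: eq_mx_integrable (mx_integrable_sum _ (fun i => mx_integrable_sum _
  (fun k => mx_integrable_moment4 (shift_idx i) (shift_idx k)))) => t.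
rewrite circulant_mulmx_tr tensmx_sum scaler_sumr.
by apply: eq_bigr => i _; rewrite scaler_sumr.
Qed.

Lemma mx_integrable_UW : mx_integrable P (fun t => UW eta W (X t)).
Proof.
apply: eq_mx_integrable
  (mx_integrable_realign (mx_integrable_mulmxl (W *t W) mx_integrable_XX)) => t.
by rewrite UWE.
Qed.

Lemma Emx_UW : Emx P (fun t => UW eta W (X t))
  = realign ((W *t W) *m Emx P (fun t => w t *: (XX t *t XX t))).
Proof.
rewrite -Emx_mulmxl; last exact: mx_integrable_XX.
by rewrite -Emx_realign; apply: eq_Emx => t; rewrite UWE.
Qed.

Lemma mx_integrable_vXX : mx_integrable P (fun t => (v t * w t) *: (XX t *t XX t)).
Proof.
by apply: eq_mx_integrable (mx_integrable_vZ mx_integrable_XX) => t; rewrite scalerA.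
Qed.

Lemma Emx_vW_UW : Emx P (fun t => v t *: UW eta W (X t))
  = realign ((W *t W) *m Emx P (fun t => (v t * w t) *: (XX t *t XX t))).
Proof.
rewrite -Emx_mulmxl -?Emx_realign; last exact: mx_integrable_vXX.
by apply: eq_Emx => t; rewrite UWE -realignZ scalemxAr scalerA.
Qed.

Hypothesis X_shift_law : forall (i : 'I_d) (A : set (d.-tuple R)), measurable A ->
  P ((fun t => tup (X t)) @^-1` A) = P ((fun t => tup (shiftv i (X t))) @^-1` A).
Hypothesis fnet_shift : forall (i : 'I_d) (x : 'cV[R]_d), fnet W (shiftv i x) = fnet W x.

Lemma mx_integrable_vW_UW_shift i :
  mx_integrable P (fun t => v t *: UW eta W (shiftv i (X t))).
Proof.
apply/mx_integrable_vZ/(eq_mx_integrable _ (mx_integrable_realign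
  (mx_integrable_mulmxl (W *t W) (mx_integrable_moment4 (shift_idx i) (shift_idx i))))).
by move=> t; rewrite UWE fnet_shift.
Qed.

Lemma Emx_vW_UW_shift i :
  Emx P (fun t => v t *: UW eta W (shiftv i (X t)))
  = Emx P (fun t => v t *: UW eta W (X t)).
Proof.
apply/matrixP => a b; rewrite [LHS]mxE [RHS]mxE.
pose H y := vW eta W (col_tuple y) * UW eta W (col_tuple y) a b.
have vW_shift x : vW eta W (shiftv i x) = vW eta W x by rewrite /vW fnet_shift.
have shiftX_measurable k : measurable_fun setT (fun t => shiftv i (X t) k 0).
  by apply: eq_measurable_fun (X_measurable (shift_idx i k)) => t _; rewrite mxE.
transitivity (\int[P]_(t in setT) H (tup (shiftv i (X t)))).
  by apply: eq_Rintegral => t _; rewrite /H tupK mxE vW_shift.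
symmetry; transitivity (\int[P]_(t in setT) H (tup (X t))).
  by apply: eq_Rintegral => t _; rewrite /H tupK mxE.
apply: (Rintegral_eq_law (H := H)).
- exact: measurable_tup.
- exact: measurable_tup.
- exact: X_shift_law.
- exact: measurable_funM (cV_measurable_vW W eta_measurable)
    (cV_measurable_UW W a b derive1_eta_measurable).
- apply: (eq_integrable measurableT _ _ _ (mx_integrable_vZ mx_integrable_UW a b)).
  by move=> t _; rewrite /= /H tupK mxE.
- apply: (eq_integrable measurableT _ _ _ (mx_integrable_vW_UW_shift i a b)).
  by move=> t _; rewrite /= /H tupK mxE vW_shift.
Qed.

Hypothesis d_gt0 : (0 < d)%N.

Lemma mx_integrable_vCC : mx_integrable P (fun t => (v t * w t) *: (CC t *t CC t)).
Proof.
by apply: eq_mx_integrable (mx_integrable_vZ mx_integrable_CC) => t; rewrite scalerA.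
Qed.

Lemma Emx_vW_covW : Emx P (fun t => v t *: covW eta W (X t))
  = Emx P (fun t => v t *: UW eta W (X t))
    - realign ((W *t W) *m ((d%:R ^+ 2)^-1 *:
        Emx P (fun t => (v t * w t) *: (CC t *t CC t)))).
Proof.
have vU_shift_integrable i := mx_integrable_vW_UW_shift i.
have covE t : v t *: covW eta W (X t)
    = d%:R^-1 *: \sum_(i < d) (v t *: UW eta W (shiftv i (X t)))
      - realign ((W *t W) *m ((d%:R ^+ 2)^-1 *: ((v t * w t) *: (CC t *t CC t)))).
  rewrite covWE // scalerBr; congr (_ - _).
    by rewrite scalerA mulrC -scalerA scaler_sumr.
  by rewrite -!scalemxAr !realignZ !scalerA; congr (_ *: _); ring.
rewrite (eq_Emx P covE) EmxB; first last.
- exact/mx_integrable_realign/mx_integrable_mulmxl/mx_integrableZ/mx_integrable_vCC.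
- exact/mx_integrableZ/mx_integrable_sum.
rewrite EmxZ; last exact: mx_integrable_sum.
rewrite Emx_sum // Emx_realign Emx_mulmxl; last exact/mx_integrableZ/mx_integrable_vCC.
rewrite EmxZ; last exact: mx_integrable_vCC.
under eq_bigr do rewrite Emx_vW_UW_shift.
rewrite sumr_const card_ord -scalerMnr scalerMnl -mulr_natr mulVf ?scale1r //.
by rewrite pnatr_eq0 -lt0n.
Qed.

Lemma Emx_vW_covW_tens : Emx P (fun t => v t *: covW eta W (X t))
  = realign ((W *t W) *m Emx P (fun t => (v t * w t) *:
      (XX t *t XX t - (d%:R ^+ 2)^-1 *: (CC t *t CC t)))).
Proof.
rewrite Emx_vW_covW Emx_vW_UW -realignB -mulmxBr -EmxZ; last exact: mx_integrable_vCC.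
rewrite -EmxB; last 2 first.
- exact: mx_integrable_vXX.
- exact/mx_integrableZ/mx_integrable_vCC.
congr (realign (_ *m _)); apply: eq_Emx => t; rewrite scalerBr; congr (_ - _).
by rewrite !scalerA; congr (_ *: _); ring.
Qed.

End ShiftInvariantModel.

Theorem corollary5p3 (R : realType) (p d : nat)
  (dT : measure_display) (T : measurableType dT) (P : probability T R)
  (X : T -> 'cV[R]_d) (eta : R -> R) (W : 'M[R]_(p, d)) :
  (forall u, 0 <= eta u <= 1) ->
  {homo eta : u v / u < v} ->
  (forall u, derivable eta u 1) ->
  (forall i : 'I_d, measurable_fun setT (fun t => X t i 0)) ->
  (forall a b c e : 'I_d,
     P.-integrable setT (fun t =>
       ((derive1 eta (fnet W (X t))) ^+ 2
        * (X t a 0 * X t b 0 * X t c 0 * X t e 0))%:E)) ->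
  let EU := Emx P (fun t => UW eta W (X t)) in
  let XX t := X t *m (X t)^T in
  let CC t := circulant (X t) *m (circulant (X t))^T in
  let w t := (derive1 eta (fnet W (X t))) ^+ 2 in
  EU = realign ((W *t W) *m Emx P (fun t => w t *: (XX t *t XX t)))
  /\ Emx P (fun t => vW eta W (X t) *: UW eta W (X t))
     = realign ((W *t W) *m Emx P (fun t => (vW eta W (X t) * w t) *: (XX t *t XX t)))
  /\ ((0 < d)%N ->
      (forall (i : 'I_d) (A : set (d.-tuple R)), measurable A ->
         P ((fun t => tup (X t)) @^-1` A) = P ((fun t => tup (shiftv i (X t))) @^-1` A)) ->
      (forall (i : 'I_d) (x : 'cV[R]_d), fnet W (shiftv i x) = fnet W x) ->
      EU \in unitmx ->
      EU *m SigmaaERM P X eta W *m EU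
        = realign ((W *t W) *m ((d%:R ^+ 2)^-1 *:
            Emx P (fun t => (vW eta W (X t) * w t) *: (CC t *t CC t))))
      /\ EU *m (SigmaERM P X eta W - SigmaaERM P X eta W) *m EU
        = realign ((W *t W) *m Emx P (fun t => (vW eta W (X t) * w t) *:
            (XX t *t XX t - (d%:R ^+ 2)^-1 *: (CC t *t CC t))))).
Proof.
move=> eta01 _ eta_derivable X_measurable X_moment4 EU XX CC w.
split; first exact: Emx_UW.
split; first exact: Emx_vW_UW.
move=> d_gt0 X_shift_law fnet_shift EU_unit.
split; first by rewrite SigmaaERM_sandwich // Emx_vW_covW // opprB addrC subrK.
by rewrite SigmaERM_subr_sandwich // Emx_vW_covW_tens.
Qed.
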